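(* Let $N$ be a positive integer, let $a_1\ge a_2\ge a_3$ be real numbers, and for $i=1,\dots,N$ let $\varphi_i(l,m,n,s)$ be real-valued functions of integers $l,m,n,s$. Write $\varphi_i(s)=\varphi_i(l,m,n,s)$ and $\boldsymbol\varphi(s)=(\varphi_1(s),\dots,\varphi_N(s))^T$. Suppose that for all integers $l,m,n,s$ and all $1\le i,i_1,i_2\le N$: (1) $\varphi_i(l+1,m,n,s)=\max(\varphi_i(l,m,n,s),\varphi_i(l,m,n,s+1)-a_1)$, $\varphi_i(l,m+1,n,s)=\max(\varphi_i(l,m,n,s),\varphi_i(l,m,n,s+1)-a_2)$, $\varphi_i(l,m,n+1,s)=\max(\varphi_i(l,m,n,s),\varphi_i(l,m,n,s+1)-a_3)$; (2) $\varphi_{i_1}(s)+\varphi_{i_2}(s)\le\max\big(\varphi_{i_1}(s-1)+\varphi_{i_2}(s+1),\ \varphi_{i_2}(s-1)+\varphi_{i_1}(s+1)\big)$; (3) for all integers $0\le k_1<k_2<k_3\le N$, $$\begin{aligned}&\mathrm{UP}[\boldsymbol\varphi(0)\cdots\widehat{\boldsymbol\varphi(k_2)}\cdots\boldsymbol\varphi(N)]+\mathrm{UP}[\boldsymbol\varphi(0)\cdots\widehat{\boldsymbol\varphi(k_1)}\cdots\widehat{\boldsymbol\varphi(k_3)}\cdots\boldsymbol\varphi(N+1)]\\ =\max\Big(&\mathrm{UP}[\boldsymbol\varphi(0)\cdots\widehat{\boldsymbol\varphi(k_3)}\cdots\boldsymbol\varphi(N)]+\mathrm{UP}[\boldsymbol\varphi(0)\cdots\widehat{\boldsymbol\varphi(k_1)}\cdots\widehat{\boldsymbol\varphi(k_2)}\cdots\boldsymbol\varphi(N+1)],\\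 &\mathrm{UP}[\boldsymbol\varphi(0)\cdots\widehat{\boldsymbol\varphi(k_1)}\cdots\boldsymbol\varphi(N)]+\mathrm{UP}[\boldsymbol\varphi(0)\cdots\widehat{\boldsymbol\varphi(k_2)}\cdots\widehat{\boldsymbol\varphi(k_3)}\cdots\boldsymbol\varphi(N+1)]\Big)\end{aligned}$$ (all vectors evaluated at the same $(l,m,n)$). Define $\tau(l,m,n)=\mathrm{UP}[\boldsymbol\varphi(0)\ \boldsymbol\varphi(1)\ \cdots\ \boldsymbol\varphi(N-1)]$, i.e. the ultradiscrete permanent of the $N\times N$ matrix $[\varphi_i(l,m,n,j-1)]_{1\le i,j\le N}$. Then for all integers $l,m,n$, $$\tau(l,m+1,n)+\tau(l+1,m,n+1)=\max\big(\tau(l+1,m,n)+\tau(l,m+1,n+1)-a_1+a_2,\ \tau(l,m,n+1)+\tau(l+1,m+1,n)\big).$$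
   Context: For a real $N\times N$ matrix $A=[a_{ij}]$, the ultradiscrete permanent is $\mathrm{UP}[A]=\max_{\pi}(a_{1\pi_1}+\cdots+a_{N\pi_N})$, maximum over all permutations $\pi$ of $\{1,\dots,N\}$. $\mathrm{UP}[\boldsymbol v_1\ \cdots\ \boldsymbol v_N]$ denotes the UP of the matrix with columns $\boldsymbol v_1,\dots,\boldsymbol v_N$ in that order; a hat $\widehat{\boldsymbol\varphi(k)}$ means that column is omitted from the list $\boldsymbol\varphi(0),\boldsymbol\varphi(1),\dots$ (so each matrix in condition (3) has exactly $N$ columns). *)

(* Reals are taken as an arbitrary realFieldType R
   (the statement only uses +, -, max, order). *)
From HB Require Import structures.
From mathcomp Require Import all_boot all_order all_algebra all_fingroup.
Set Implicit Arguments. Unset Strict Implicit. Unset Printing Implicit Defensive.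
Import Order.TTheory GRing.Theory Num.Theory.
Local Open Scope ring_scope.

(* The fold starts from the value at the identity
   permutation, which is itself one of the terms, so this is exactly
   the maximum. *)
Definition UP (R : realFieldType) (N : nat) (A : 'M[R]_N) : R :=
  \big[Num.max/(\sum_(i < N) A i i)]_(s : 'S_N) \sum_(i < N) A i (s i).

Definition UPcols (R : realFieldType) (N : nat) (v : 'I_N -> int -> R)
  (c : seq nat) : R :=
  UP (\matrix_(i < N, j < N) v i (Posz (nth 0%N c j))).

Definition omit1 (M k : nat) : seq nat := [seq j <- iota 0 M.+1 | j != k].
Definition omit2 (M k k' : nat) : seq nat :=
  [seq j <- iota 0 M.+1 | (j != k) && (j != k')].

From HB Require Import structures.
From mathcomp Require Import all_boot all_order all_algebra all_fingroup.
From mathcomp Require Import ring lra zify.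
Import Order.TTheory GRing.Theory Num.Theory.
Local Open Scope ring_scope.
Set Implicit Arguments. Unset Strict Implicit. Unset Printing Implicit Defensive.

(* The entries of the matrices defining the various tau are obtained from those of tau(l,m,n)
   by one or two ultradiscrete shifts v(s) |-> max (v(s), v(s+1) - a).  Expanding the maxima,
   UP of such a matrix is the maximum, over shift patterns t (column j moved to label j + t j),
   of the UP of the relabelled matrix minus the cost of t.  Condition (2) pulls apart two equally
   labelled columns, swapping columns is free, and the cost is convex, so every pattern can be
   sorted without loss: the maximum is attained at threshold patterns.  Hence one shift gives
   max_k U_k - (N - k) a, where U_k is the UP with label k omitted, and two shifts give a maximum
   over pairs of omitted labels.  The bilinear equation becomes an identity between such maxima,
   proved by comparing the maximizing labels: the rearrangement inequality for a1 >= a2 >= a3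
   handles their relative positions, and the Pluecker-type relation (3) the interleaved cases. *)

Definition is_max_over (R : realFieldType) (I : Type) (P : I -> Prop) (f : I -> R)
    (m : R) :=
  (forall i, P i -> f i <= m) /\ (exists2 i, P i & m = f i).

Lemma is_max_overP (R : realFieldType) (I : Type) (P : I -> Prop) (f : I -> R) m :
  (forall i, P i -> f i <= m) -> (exists2 i, P i & m <= f i) -> is_max_over P f m.
Proof.
by move=> ub [i Pi le_m]; split=> //; exists i => //; apply/le_anti; rewrite le_m ub.
Qed.

Lemma is_max_over_reindex (R : realFieldType) (I J : Type) (P : I -> Prop)
    (Q : J -> Prop) (f : I -> R) (h : J -> R) (e : J -> I) (m : R) :
  (forall j, Q j -> P (e j) /\ h j = f (e j)) ->
  (forall i, P i -> exists2 j, Q j & f i = h j) ->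
  is_max_over P f m -> is_max_over Q h m.
Proof.
move=> eQ PQ [ub [i Pi mE]]; split; last by have [j Qj fE] := PQ i Pi; exists j; rewrite // mE.
by move=> j Qj; have [Pj ->] := eQ j Qj; exact: ub.
Qed.

Lemma big_pair (T : Type) (idx : T) (op : Monoid.com_law idx) N (F : 'I_N -> T)
    (i1 i2 : 'I_N) : i1 != i2 ->
  \big[op/idx]_i F i = op (op (F i1) (F i2)) (\big[op/idx]_(i | (i != i1) && (i != i2)) F i).
Proof.
by move=> n12; rewrite (bigD1 i1) //= (bigD1 i2) 1?eq_sym //= Monoid.mulmA.
Qed.

Lemma ltn_sum_pair N (F G : 'I_N -> nat) (i1 i2 : 'I_N) : i1 != i2 ->
  (forall i, i != i1 -> i != i2 -> F i = G i) ->
  (F i1 + F i2 < G i1 + G i2)%N -> (\sum_i F i < \sum_i G i)%N.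
Proof.
move=> n12 eqFG lt12; rewrite !(big_pair _ _ n12) (eq_bigr G) ?ltn_add2r //.
by move=> i /andP[]; exact: eqFG.
Qed.

Section UltradiscretePermanent.
Variable R : realFieldType.

Lemma le_UP N (A : 'M[R]_N) (s : 'S_N) : \sum_i A i (s i) <= UP A.
Proof. exact: (le_bigmax _ (fun s : 'S_N => \sum_i A i (s i)) s). Qed.

Lemma UP_attained N (A : 'M[R]_N) : exists s : 'S_N, UP A = \sum_i A i (s i).
Proof.
rewrite /UP; elim/big_rec: _ => [|s x _ [s0 ->]].
  by exists 1%g; apply: eq_bigr => i _; rewrite perm1.
by rewrite maxEle; case: ifP => _; [exists s0 | exists s].
Qed.

Lemma ler_sum_pair N (F G : 'I_N -> R) (i1 i2 : 'I_N) : i1 != i2 ->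
  (forall i, i != i1 -> i != i2 -> F i = G i) ->
  F i1 + F i2 <= G i1 + G i2 -> \sum_i F i <= \sum_i G i.
Proof.
move=> n12 eqFG le12; rewrite !(big_pair _ _ n12) lerD // (eq_bigr G) //.
by move=> i /andP[]; exact: eqFG.
Qed.

Definition colmx N (g : 'I_N -> int -> R) (c : 'I_N -> nat) : 'M[R]_N :=
  \matrix_(i, j) g i (Posz (c j)).

Definition exchangeable N (g : 'I_N -> int -> R) :=
  forall i1 i2 (s : int), g i1 s + g i2 s <=
     Num.max (g i1 (s - 1) + g i2 (s + 1)) (g i2 (s - 1) + g i1 (s + 1)).

Lemma UP_colmx_tperm N (g : 'I_N -> int -> R) (c : 'I_N -> nat) (j k : 'I_N) :
  UP (colmx g c) <= UP (colmx g (c \o tperm j k)).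
Proof.
have [s ->] := UP_attained (colmx g c); apply: le_trans (le_UP _ (s * tperm j k)%g).
by rewrite le_eqVlt; apply/orP; left; apply/eqP/eq_bigr => i _; rewrite !mxE /= permM tpermK.
Qed.

Lemma UP_colmx_exchange N (g : 'I_N -> int -> R) (c c' : 'I_N -> nat)
    (j k : 'I_N) (s : nat) :
  exchangeable g -> j != k -> c j = s.+1 -> c k = s.+1 -> c' j = s -> c' k = s.+2 ->
  (forall x, x != j -> x != k -> c' x = c x) ->
  UP (colmx g c) <= UP (colmx g c').
Proof.
move=> g_exch njk cj ck c'j c'k ceq.
have [σ ->] := UP_attained (colmx g c).
set i1 := (σ^-1)%g j; set i2 := (σ^-1)%g k.
have [s1 s2] : σ i1 = j /\ σ i2 = k by rewrite /i1 /i2 !permKV.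
have n12 : i1 != i2 by apply: contra njk => /eqP e; rewrite -s1 -s2 e.
have off : forall i, i != i1 -> i != i2 -> (σ i != j) && (σ i != k).
  by move=> i ni1 ni2; rewrite -s1 -s2 !(inj_eq perm_inj) ni1 ni2.
have := g_exch i1 i2 (Posz s.+1).
have -> : Posz s.+1 - 1 = Posz s by rewrite -addn1 PoszD addrK.
have -> : Posz s.+1 + 1 = Posz s.+2 by rewrite -[s.+2]addn1 PoszD.
rewrite le_max => /orP[h|h].
  apply: le_trans (le_UP _ σ); apply: (ler_sum_pair n12).
    by move=> i ni1 ni2; have /andP[? ?] := off i ni1 ni2; rewrite !mxE ceq.
  by rewrite !mxE s1 s2 cj ck c'j c'k.
apply: le_trans (le_UP _ (σ * tperm j k)%g); apply: (ler_sum_pair n12).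
  move=> i ni1 ni2; have /andP[? ?] := off i ni1 ni2.
  by rewrite !mxE permM tpermD 1?eq_sym // ceq.
by rewrite !mxE !permM s1 s2 tpermL tpermR cj ck c'j c'k [X in _ <= X]addrC.
Qed.

End UltradiscretePermanent.

(* A shift [t] moves column [j] to label [j + t j]; only [t] on [[0, N)] matters. *)
Definition shift_bounded N K (t : nat -> nat) := forall x, (x < N)%N -> (t x <= K)%N.
Definition shift_sorted N (t : nat -> nat) := forall x, (x.+1 < N)%N -> (t x <= t x.+1)%N.

Lemma shift_sorted_mono N t x y :
  shift_sorted N t -> (x <= y)%N -> (y < N)%N -> (t x <= t y)%N.
Proof.
move=> st xy yN; have xN : (x < N)%N by apply: leq_ltn_trans yN.
apply: (@homo_leq_in _ [pred x | x < N]%N t leq leqnn (fun _ _ _ => @leq_trans _ _ _))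
  => //= [i j _ jN k /andP[_ kj]|i _ iN]; [exact: ltn_trans kj jN | exact: st].
Qed.

Lemma shift_sorted_level N t v : shift_sorted N t ->
  exists2 A, (A <= N)%N & forall x, (x < N)%N -> (v <= t x)%N = (A <= x)%N.
Proof.
move=> st; pose A := find (fun x => v <= t x)%N (iota 0 N).
have AN : (A <= N)%N by rewrite -[N in (_ <= N)%N](size_iota 0) find_size.
exists A => // x xN; case: (leqP A x) => [Ax|xA].
  have AN' : (A < N)%N by apply: leq_ltn_trans xN.
  have hasv : has (fun x => v <= t x)%N (iota 0 N) by rewrite has_find size_iota.
  have := nth_find 0%N hasv; rewrite -/A nth_iota // add0n => vA.
  exact: leq_trans vA (shift_sorted_mono st Ax xN).
apply/negbTE.
by have := before_find 0%N xA; rewrite nth_iota ?add0n //; lia.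
Qed.

Section ColumnShifts.
Variables (R : realFieldType) (N K : nat) (g : 'I_N -> int -> R) (w : nat -> R).
Hypothesis g_exch : exchangeable g.
Hypothesis w_convex :
  forall x y, (x.+2 <= y)%N -> (y <= K)%N -> w x.+1 + w y.-1 <= w x + w y.

Definition shifted_UP (t : nat -> nat) : R :=
  UP (colmx g (fun j => j + t j)%N) - \sum_(j < N) w (t j).

Lemma shifted_UP_eq t t' :
  (forall x, (x < N)%N -> t x = t' x) -> shifted_UP t = shifted_UP t'.
Proof.
move=> tt'; rewrite /shifted_UP (eq_bigr (fun j : 'I_N => w (t' j))) => [|j _]; last by rewrite tt'.
by congr (UP _ - _); apply/matrixP => i j; rewrite !mxE tt'.
Qed.

Let upd (t : nat -> nat) j a b : nat -> nat :=
  fun x => if x == j then a else if x == j.+1 then b else t x.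

Let shift_potential (t : nat -> nat) := (\sum_(j < N) j * t j)%N.

Lemma shifted_UP_sort_step t j : shift_bounded N K t ->
    (j.+1 < N)%N -> (t j.+1 < t j)%N ->
  exists t', [/\ shift_bounded N K t', (shift_potential t < shift_potential t')%N &
    shifted_UP t <= shifted_UP t'].
Proof.
move=> tb hj hlt; pose jo : 'I_N := Ordinal (ltnW hj); pose ko : 'I_N := Ordinal hj.
have njk : jo != ko by rewrite -val_eqE /= neq_ltn ltnSn.
have [tjK tj1K] := (tb j (ltnW hj), tb j.+1 hj).
have jj : (j.+1 == j) = false by rewrite gtn_eqF.
have upd_off a b (x : 'I_N) : x != jo -> x != ko -> upd t j a b x = t x.
  by rewrite -!val_eqE /upd /= => /negbTE-> /negbTE->.
have [tjE|tjN] := eqVneq (t j) (t j.+1).+1.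
  exists (upd t j (t j.+1) (t j)); split.
  - by move=> x xN; rewrite /upd; case: ifP => _ //; case: ifP => _ //; exact: tb.
  - apply: (ltn_sum_pair njk) => [x ? ?|]; first by rewrite upd_off.
    rewrite /upd /= !eqxx jj tjE; nia.
  apply: lerB; last first.
    apply: (ler_sum_pair njk) => [x ? ?|]; first by rewrite upd_off.
    by rewrite /upd /= !eqxx jj addrC.
  apply: (UP_colmx_exchange (j := jo) (k := ko) (s := (j + t j.+1)%N)) => //;
    try by rewrite /upd /= ?eqxx ?jj ?tjE; lia.
  by move=> x ? ?; rewrite upd_off.
have ge2 : ((t j.+1).+2 <= t j)%N by rewrite ltn_neqAle eq_sym tjN hlt.
exists (upd t j (t j.+1).+1 (t j).-1); split.
- move=> x xN; rewrite /upd; case: ifP => _; first by lia.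
  by case: ifP => _; [lia | exact: tb].
- apply: (ltn_sum_pair njk) => [x ? ?|]; first by rewrite upd_off.
  rewrite /upd /= !eqxx jj; have -> : (t j).-1 = (t j - 1)%N by lia.
  nia.
apply: lerB; last first.
  apply: (ler_sum_pair njk) => [x ? ?|]; first by rewrite upd_off.
  by rewrite /upd /= !eqxx jj [X in _ <= X]addrC; exact: w_convex.
(* the new labels are the old ones with columns [j] and [j + 1] swapped *)
apply: le_trans (UP_colmx_tperm g _ jo ko) _; rewrite le_eqVlt; apply/orP; left.
apply/eqP; congr UP; apply/matrixP => i x; rewrite !mxE /=.
have [->|nj] := eqVneq x jo; first by rewrite tpermL /upd /= eqxx; congr (g _ (Posz _)); lia.
have [->|nk] := eqVneq x ko; first by rewrite tpermR /upd /= eqxx jj; congr (g _ (Posz _)); lia.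
by rewrite tpermD 1?eq_sym // upd_off.
Qed.

Lemma shifted_UP_sort t : shift_bounded N K t ->
  exists2 t', shift_bounded N K t' /\ shift_sorted N t' & shifted_UP t <= shifted_UP t'.
Proof.
have pot_bound t' : shift_bounded N K t' -> (shift_potential t' <= N * (N * K))%N.
  move=> tb; have -> : (N * (N * K) = \sum_(j < N) N * K)%N by rewrite sum_nat_const card_ord.
  by apply: leq_sum => j _; apply: leq_mul; [exact: ltnW | exact: tb].
have sorted_or_step t' : shift_sorted N t' \/ exists j, (j.+1 < N)%N /\ (t' j.+1 < t' j)%N.
  case: (boolP [exists j : 'I_N, (j.+1 < N)%N && (t' j.+1 < t' j)%N]).
    by case/existsP => j /andP[? ?]; right; exists j.
  move/existsPn => sorted; left => x xN; have /= := sorted (Ordinal (ltnW xN)).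
  by rewrite xN /= -leqNgt.
move=> tb; move: {2}(N * (N * K) - shift_potential t)%N (leqnn (N * (N * K) - shift_potential t)).
move=> d; elim: d t tb => [|d IH] t tb hd;
  (have [st|[j [hj hlt]]] := sorted_or_step t; first by exists t);
  have [t' [tb' lt' le']] := shifted_UP_sort_step tb hj hlt; have := pot_bound t' tb'.
  by lia.
move=> ?; have [|t'' st'' le''] := IH t' tb'; first by lia.
by exists t'' => //; exact: le_trans le''.
Qed.

Lemma UP_shifted_max (E : 'I_N -> nat -> R) :
  (forall i j, is_max_over (fun t => (t <= K)%N) (fun t => g i (Posz (j + t)) - w t) (E i j)) ->
  is_max_over (fun t => shift_bounded N K t /\ shift_sorted N t) shifted_UP
    (UP (\matrix_(i < N, j < N) E i j)).
Proof.
move=> E_max.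
have ub t : shift_bounded N K t -> shifted_UP t <= UP (\matrix_(i < N, j < N) E i j).
  move=> tb; rewrite /shifted_UP; have [σ ->] := UP_attained (colmx g (fun j => j + t j)%N).
  rewrite [X in _ - X](reindex_inj (@perm_inj _ σ)) -sumrB; apply: le_trans (le_UP _ σ).
  by apply: ler_sum => i _; rewrite !mxE; apply: (proj1 (E_max _ _)); exact: tb.
apply: is_max_overP => [t [tb _]|]; first exact: ub.
have [σ Eσ] := UP_attained (\matrix_(i < N, j < N) E i j).
have [f fK Ef] := fin_all_exists2 (fun j : 'I_N => proj2 (E_max ((σ^-1)%g j) j)).
pose t x := oapp f 0%N (insub x : option 'I_N).
have tf (j : 'I_N) : t j = f j by rewrite /t valK.
have tb : shift_bounded N K t by move=> x xN; rewrite /t insubT /=.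
have [t' [tb' st'] le'] := shifted_UP_sort tb; exists t' => //; apply: le_trans le'.
rewrite Eσ /shifted_UP; apply: le_trans (lerB (le_UP (colmx g (fun j => j + t j)%N) σ) (lexx _)).
rewrite [X in _ - X](reindex_inj (@perm_inj _ σ)) -sumrB.
apply: ler_sum => i _; rewrite !mxE tf.
by have := Ef (σ i); rewrite permK => ->.
Qed.

End ColumnShifts.

Lemma filter_iota_all (P : pred nat) a n :
  (forall x, (a <= x < a + n)%N -> P x) -> filter P (iota a n) = iota a n.
Proof.
move=> h; rewrite (@eq_in_filter _ P predT) ?filter_predT // => x.
by rewrite mem_iota => /h.
Qed.

Lemma omit1E M k : (k <= M)%N -> omit1 M k = iota 0 k ++ iota k.+1 (M - k).
Proof.
move=> kM; rewrite /omit1.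
have -> : iota 0 M.+1 = iota 0 k ++ k :: iota k.+1 (M - k).
  by rewrite -[M.+1](@subnKC k) 1?ltnW // iotaD /= add0n subSn.
by rewrite filter_cat /= eqxx /= !filter_iota_all // => x /andP[]; lia.
Qed.

Lemma omit2E M p q : (p < q <= M)%N ->
  omit2 M p q = iota 0 p ++ iota p.+1 (q - p.+1) ++ iota q.+1 (M - q).
Proof.
move=> /andP[pq qM]; rewrite /omit2.
have -> : iota 0 M.+1 = iota 0 p ++ p :: iota p.+1 (q - p.+1) ++ q :: iota q.+1 (M - q).
  have e : M.+1 = (p + (1 + ((q - p.+1) + (1 + (M - q)))))%N by lia.
  have e2 : (p + 1 + (q - p.+1) = q)%N by lia.
  by rewrite e !iotaD /= !add0n e2 !addn1.
rewrite filter_cat /= eqxx /= filter_cat /= eqxx andbF /=.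
by rewrite !filter_iota_all // => x /andP[? ?]; apply/andP; split; lia.
Qed.

Lemma nth_omit1 M k j : (k <= M)%N -> (j < M)%N ->
  nth 0%N (omit1 M k) j = (j + (k <= j))%N.
Proof.
move=> kM jM; rewrite omit1E // nth_cat size_iota.
by case: ltnP => h; rewrite nth_iota; lia.
Qed.

Lemma nth_omit2 M p q j : (p < q <= M)%N -> (j.+1 < M)%N ->
  nth 0%N (omit2 M p q) j = (j + (p <= j) + (q <= j.+1))%N.
Proof.
move=> hpq jM; have /andP[pq qM] := hpq; rewrite omit2E // !nth_cat !size_iota.
by case: ltnP => h; [|case: ltnP => h2]; rewrite nth_iota; lia.
Qed.

Lemma omit2_last N p : (p <= N)%N -> omit2 N.+1 p N.+1 = omit1 N p.
Proof.
move=> pN; rewrite omit2E ?omit1E //; last by apply/andP; split; lia.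
by rewrite subnn /= cats0 subSS.
Qed.

Lemma sum_threshold (R : realFieldType) N A (c : R) :
  \sum_(x < N) (if (A <= x)%N then c else 0) = (N - A)%:R * c.
Proof.
elim: N => [|N IH]; first by rewrite big_ord0 sub0n mul0r.
rewrite big_ord_recr /= IH; case: (leqP A N) => h.
  by rewrite subSn // mulrSr mulrDl mul1r.
have -> : (N.+1 - A = 0)%N by lia.
have -> : (N - A = 0)%N by lia.
by rewrite mul0r addr0.
Qed.

(* Maximum of [U k - (N - k) x] over [k <= N], written without truncated subtraction. *)
Definition single_max (R : realFieldType) N (U : nat -> R) (x : R) :=
  is_max_over (fun k => (k <= N)%N) (fun k => U k + k%:R * x - N%:R * x).

(* Maximum of [V p q - (N - p) y - (N + 1 - q) x] over the omitted labels [p < q <= N + 1]. *)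
Definition pair_max (R : realFieldType) N (V : nat -> nat -> R) (x y : R) :=
  is_max_over (fun pq : nat * nat => (pq.1 < pq.2 <= N.+1)%N)
    (fun pq => V pq.1 pq.2 + pq.1%:R * y + pq.2%:R * x - N%:R * x - N%:R * y - x).

Definition shift_cost1 (R : realFieldType) (x : R) (t : nat) : R :=
  if t == 0%N then 0 else x.

Definition shift_cost2 (R : realFieldType) (x y : R) (t : nat) : R :=
  if t == 0%N then 0 else if t == 1%N then y else x + y.

Section ShiftCosts.
Variable R : realFieldType.

Lemma shift_cost1_convex (x : R) a b :
  (a.+2 <= b)%N -> (b <= 1)%N ->
  shift_cost1 x a.+1 + shift_cost1 x b.-1 <= shift_cost1 x a + shift_cost1 x b.
Proof. by lia. Qed.

Lemma shift_cost2_convex (x y : R) : y <= x -> forall a b, (a.+2 <= b)%N -> (b <= 2)%N ->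
  shift_cost2 x y a.+1 + shift_cost2 x y b.-1 <= shift_cost2 x y a + shift_cost2 x y b.
Proof.
by move=> yx a b; case: a => [|a]; case: b => [|[|[|b]]] //= _ _; rewrite /shift_cost2 /=; lra.
Qed.

Lemma max_shift1 (h : nat -> R) x :
  is_max_over (fun t => (t <= 1)%N) (fun t => h t - shift_cost1 x t)
    (Num.max (h 0%N) (h 1%N - x)).
Proof.
apply: is_max_overP => [[|[|t]] // _|].
- by rewrite /shift_cost1 /= subr0 le_max lexx.
- by rewrite /shift_cost1 /= le_max lexx orbT.
by rewrite maxEle; case: ifP => _; [exists 1%N | exists 0%N; rewrite ?subr0].
Qed.

Lemma max_shift2 (h : nat -> R) x y : y <= x ->
  is_max_over (fun t => (t <= 2)%N) (fun t => h t - shift_cost2 x y t)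
    (Num.max (Num.max (h 0%N) (h 1%N - y)) (Num.max (h 1%N) (h 2%N - y) - x)).
Proof.
move=> yx; set a := h 0%N; set b := h 1%N; set c := h 2%N.
apply: is_max_overP => [[|[|[|t]]] // _|]; rewrite /shift_cost2 /= -/a -/b -/c ?subr0.
- by rewrite !le_max lexx.
- by rewrite !le_max lexx !orbT.
- have : c - y <= Num.max b (c - y) by rewrite le_max lexx orbT.
  by move=> ?; rewrite le_max; apply/orP; right; lra.
set m := Num.max _ _.
have [m_le|m_le|m_le] : [\/ m <= a, m <= b - y | m <= c - (x + y)].
  rewrite /m [Num.max a _]maxEle [Num.max b _]maxEle.
  case: ifP => h1; try (move/negbT: h1; rewrite -ltNge => h1);
  case: ifP => h2; try (move/negbT: h2; rewrite -ltNge => h2);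
  rewrite maxEle; case: ifP => h3; try (move/negbT: h3; rewrite -ltNge => h3);
  first [by constructor 1; lra | by constructor 2; lra | by constructor 3; lra].
- by exists 0%N; rewrite // /shift_cost2 /= subr0.
- by exists 1%N.
- by exists 2%N.
Qed.

Lemma sum_shift_cost1 N k (x : R) : (k <= N)%N ->
  \sum_(j < N) shift_cost1 x (k <= j)%N = N%:R * x - k%:R * x.
Proof.
move=> kN; rewrite -mulrBl -natrB // -sum_threshold.
by apply: eq_bigr => j _; rewrite /shift_cost1; case: leqP.
Qed.

Lemma sum_shift_cost2 N p q (x y : R) : (p < q <= N.+1)%N ->
  \sum_(j < N) shift_cost2 x y ((p <= j) + (q <= j.+1))%N =
    N%:R * y - p%:R * y + N%:R * x - q%:R * x + x.
Proof.
move=> /andP[pq qN].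
rewrite (eq_bigr (fun j : 'I_N =>
  (if (p <= j)%N then y else 0) + (if (q.-1 <= j)%N then x else 0))); last first.
  move=> j _; rewrite /shift_cost2; have -> : (q <= j.+1)%N = (q.-1 <= j)%N by lia.
  case: (leqP p j) => h1; case: (leqP q.-1 j) => h2 //=.
  - by rewrite addrC.
  - by rewrite addr0.
  - by lia.
  - by rewrite addr0.
rewrite big_split /= !sum_threshold (_ : N - q.-1 = N.+1 - q)%N; last by lia.
by rewrite !natrB // -?natr1; [ring | lia].
Qed.

End ShiftCosts.

Section ShiftedPermanents.
Variables (R : realFieldType) (N : nat) (g : 'I_N -> int -> R).
Hypothesis g_exch : exchangeable g.

Let succ (j : nat) : Posz j + 1 = Posz j.+1.
Proof. by rewrite -addn1 PoszD. Qed.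

Lemma UP_single_shift (E : 'I_N -> int -> R) x :
  (forall i s, E i s = Num.max (g i s) (g i (s + 1) - x)) ->
  single_max N (fun k => UPcols g (omit1 N k)) x
    (UP (\matrix_(i < N, j < N) E i (Posz j))).
Proof.
move=> Eg; pose e k j : nat := (k <= j)%N.
have E_max i (j : nat) : is_max_over (fun t => (t <= 1)%N)
    (fun t => g i (Posz (j + t)) - shift_cost1 x t) (E i j).
  by rewrite Eg succ; have := max_shift1 (fun t => g i (Posz (j + t))) x; rewrite addn0 addn1.
have value k : (k <= N)%N ->
    shifted_UP g (shift_cost1 x) (e k) = UPcols g (omit1 N k) + k%:R * x - N%:R * x.
  move=> kN; rewrite /shifted_UP sum_shift_cost1 // opprB addrA.
  by congr (UP _ + _ - _); apply/matrixP => i j; rewrite !mxE nth_omit1.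
apply: (is_max_over_reindex (e := e))
  (UP_shifted_max g_exch (@shift_cost1_convex _ x) E_max).
  move=> k kN; rewrite value //; split=> //.
  by split; rewrite /shift_bounded /shift_sorted /e => x' _; lia.
move=> t [tb st]; have [A AN tA] := shift_sorted_level 1 st; exists A => //.
rewrite -value //; apply: shifted_UP_eq => x' x'N.
by have := tA x' x'N; have := tb x' x'N; rewrite /e; lia.
Qed.

Lemma UP_double_shift (F E : 'I_N -> int -> R) x y : y <= x ->
  (forall i s, F i s = Num.max (g i s) (g i (s + 1) - y)) ->
  (forall i s, E i s = Num.max (F i s) (F i (s + 1) - x)) ->
  pair_max N (fun p q => UPcols g (omit2 N.+1 p q)) x y
    (UP (\matrix_(i < N, j < N) E i (Posz j))).
Proof.
move=> yx Fg EF; pose e (pq : nat * nat) j : nat := ((pq.1 <= j) + (pq.2 <= j.+1))%N.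
have E_max i (j : nat) : is_max_over (fun t => (t <= 2)%N)
    (fun t => g i (Posz (j + t)) - shift_cost2 x y t) (E i j).
  rewrite EF !Fg !succ; have := max_shift2 (fun t => g i (Posz (j + t))) yx.
  by rewrite /= addn0 addn1 addn2.
have value p q : (p < q <= N.+1)%N -> shifted_UP g (shift_cost2 x y) (e (p, q)) =
    UPcols g (omit2 N.+1 p q) + p%:R * y + q%:R * x - N%:R * x - N%:R * y - x.
  move=> pqN; rewrite /shifted_UP sum_shift_cost2 //.
  have -> : UP (colmx g (fun j => j + e (p, q) j)%N) = UPcols g (omit2 N.+1 p q).
    by congr UP; apply/matrixP => i j; rewrite !mxE nth_omit2 ?addnA ?ltnS.
  by ring.
apply: (is_max_over_reindex (e := e))
  (UP_shifted_max g_exch (shift_cost2_convex yx) E_max).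
  move=> [p q] /= pqN; rewrite value //; split=> //.
  by split; rewrite /shift_bounded /shift_sorted /e /= => x' _; lia.
move=> t [tb st]; have [A1 A1N tA1] := shift_sorted_level 1 st.
have [A2 A2N tA2] := shift_sorted_level 2 st.
have A12 : (A1 <= A2)%N.
  have [A2N'|] := ltnP A2 N; last by lia.
  by have := tA1 A2 A2N'; have := tA2 A2 A2N'; lia.
exists (A1, A2.+1); first by apply/andP; split => /=; lia.
rewrite /= -value; last by apply/andP; split; lia.
apply: shifted_UP_eq => x' x'N.
by have := tA1 x' x'N; have := tA2 x' x'N; have := tb x' x'N; rewrite /e /=; lia.
Qed.

End ShiftedPermanents.

Lemma single_maxP (R : realFieldType) N (U : nat -> R) x t : single_max N U x t ->
  (forall k, (k <= N)%N -> U k + k%:R * x - N%:R * x <= t) /\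
  (exists2 k, (k <= N)%N & t = U k + k%:R * x - N%:R * x).
Proof. by []. Qed.

Lemma pair_maxP (R : realFieldType) N (V : nat -> nat -> R) x y t : pair_max N V x y t ->
  (forall p q, (p < q)%N -> (q <= N.+1)%N ->
     V p q + p%:R * y + q%:R * x - N%:R * x - N%:R * y - x <= t) /\
  (exists p q, [/\ (p < q)%N, (q <= N.+1)%N &
     t = V p q + p%:R * y + q%:R * x - N%:R * x - N%:R * y - x]).
Proof.
case=> ub [[p q] /andP[pq qN] tE]; split; last by exists p, q.
by move=> p' q' pq' q'N; apply: (ub (p', q')); rewrite /= pq'.
Qed.

Lemma ler_rearrange (R : realFieldType) (i j : nat) (a b : R) :
  (i <= j)%N -> b <= a -> i%:R * a + j%:R * b <= i%:R * b + j%:R * a.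
Proof.
move=> ij ba; have : 0 <= (j%:R - i%:R) * (a - b).
  by apply: mulr_ge0; rewrite subr_ge0 // ler_nat.
lra.
Qed.

Section MaxPluckerIdentity.
Variables (R : realFieldType) (N : nat) (U : nat -> R) (V : nat -> nat -> R).
Variables (a1 a2 a3 : R).
Hypotheses (a21 : a2 <= a1) (a32 : a3 <= a2).
Hypothesis V_last : forall p, (p <= N)%N -> V p N.+1 = U p.
Hypothesis plucker : forall k1 k2 k3, (k1 < k2)%N -> (k2 < k3)%N -> (k3 <= N)%N ->
  U k2 + V k1 k3 = Num.max (U k3 + V k1 k2) (U k1 + V k2 k3).
Variables (t1 t2 t3 t12 t13 t23 : R).
Hypotheses (T1 : single_max N U a1 t1) (T2 : single_max N U a2 t2)
  (T3 : single_max N U a3 t3).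
Hypotheses (T12 : pair_max N V a1 a2 t12) (T13 : pair_max N V a1 a3 t13)
  (T23 : pair_max N V a2 a3 t23).

Local Ltac rearrange i j :=
  let h := fresh "h" in
  have h : (i <= j)%N := ltac:(lia);
  move: (ler_rearrange h a21) (ler_rearrange h a32)
    (ler_rearrange h (le_trans a32 a21)); clear h.

Lemma max_plucker_le : t2 + t13 <= Num.max (t1 + t23 - a1 + a2) (t3 + t12).
Proof.
have [_ [k2 k2N e2]] := single_maxP T2; have [_ [p13 [q13 [pq13 q13N e13]]]] := pair_maxP T13.
have [u1 _] := single_maxP T1; have [u3 _] := single_maxP T3.
have [v23 _] := pair_maxP T23; have [v12 _] := pair_maxP T12.
rewrite e2 e13 le_max.
case: (ltngtP k2 p13) => hkp.
- apply/orP; right.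
  have := u3 k2 k2N; have := v12 p13 q13 pq13 q13N.
  rearrange k2 p13; rearrange k2 q13; rearrange p13 q13; lra.
- case: (ltngtP k2 q13) => hkq.
  + (* relation (3) needs [q13 <= N]; for [q13 = N + 1] use [V p (N + 1) = U p] instead *)
    case: (eqVneq q13 N.+1) => hq.
      apply/orP; right.
      have := u3 p13 ltac:(lia); have := v12 k2 q13 hkq q13N.
      rewrite hq V_last ?V_last; try lia.
      rearrange p13 k2; rearrange k2 q13; rearrange p13 q13; lra.
    have : U k2 + V p13 q13 <= Num.max (U q13 + V p13 k2) (U p13 + V k2 q13).
      by rewrite (plucker hkp hkq ltac:(lia)).
    rewrite le_max => /orP[h|h].
      apply/orP; left.
      have := u1 q13 ltac:(lia); have := v23 p13 k2 hkp ltac:(lia).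
      rearrange p13 k2; rearrange k2 q13; rearrange p13 q13; lra.
    apply/orP; right.
    have := u3 p13 ltac:(lia); have := v12 k2 q13 hkq q13N.
    rearrange p13 k2; rearrange k2 q13; rearrange p13 q13; lra.
  + apply/orP; left.
    have := u1 k2 k2N; have := v23 p13 q13 pq13 ltac:(lia).
    rearrange p13 k2; rearrange q13 k2; rearrange p13 q13; lra.
  + apply/orP; left.
    have := u1 q13 ltac:(lia); have := v23 p13 q13 pq13 q13N.
    rewrite -hkq; rearrange p13 k2; lra.
- apply/orP; right.
  have := u3 k2 k2N; have := v12 k2 q13 ltac:(lia) q13N.
  rewrite hkp; rearrange p13 q13; lra.
Qed.

Lemma max_plucker_ge_left : t1 + t23 - a1 + a2 <= t2 + t13.
Proof.
have [_ [k1 k1N e1]] := single_maxP T1; have [_ [p23 [q23 [pq23 q23N e23]]]] := pair_maxP T23.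
have [u2 _] := single_maxP T2; have [v13 _] := pair_maxP T13.
rewrite e1 e23.
case: (ltngtP k1 p23) => hkp.
- have hP : U k1 + V p23 q23 <= U p23 + V k1 q23.
    case: (eqVneq q23 N.+1) => hq.
      by rewrite hq !V_last; try lia; rewrite addrC.
    by rewrite (plucker hkp pq23 ltac:(lia)) le_max lexx orbT.
  have := u2 p23 ltac:(lia); have := v13 k1 q23 ltac:(lia) q23N.
  rearrange k1 p23; rearrange k1 q23; rearrange p23 q23; lra.
- case: (ltngtP k1 q23) => hkq.
  + have := u2 k1 k1N; have := v13 p23 q23 pq23 q23N.
    rearrange p23 k1; rearrange k1 q23; rearrange p23 q23; lra.
  + have hP : U k1 + V p23 q23 <= U q23 + V p23 k1.
      by rewrite (plucker pq23 hkq k1N) le_max lexx.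
    have := u2 q23 ltac:(lia); have := v13 p23 k1 hkp ltac:(lia).
    rearrange p23 k1; rearrange q23 k1; rearrange p23 q23; lra.
  + have := u2 q23 ltac:(lia); have := v13 p23 q23 pq23 q23N.
    rewrite -hkq; rearrange p23 k1; lra.
- have := u2 k1 k1N; have := v13 k1 q23 ltac:(lia) q23N.
  rewrite hkp; rearrange p23 q23; lra.
Qed.

Lemma max_plucker_ge_right : t3 + t12 <= t2 + t13.
Proof.
have [_ [k3 k3N e3]] := single_maxP T3; have [_ [p12 [q12 [pq12 q12N e12]]]] := pair_maxP T12.
have [u2 _] := single_maxP T2; have [v13 _] := pair_maxP T13.
rewrite e3 e12.
case: (ltngtP k3 p12) => hkp.
- have hP : U k3 + V p12 q12 <= U p12 + V k3 q12.
    case: (eqVneq q12 N.+1) => hq.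
      by rewrite hq !V_last; try lia; rewrite addrC.
    by rewrite (plucker hkp pq12 ltac:(lia)) le_max lexx orbT.
  have := u2 p12 ltac:(lia); have := v13 k3 q12 ltac:(lia) q12N.
  rearrange k3 p12; rearrange k3 q12; rearrange p12 q12; lra.
- case: (ltngtP k3 q12) => hkq.
  + have := u2 k3 k3N; have := v13 p12 q12 pq12 q12N.
    rearrange p12 k3; rearrange k3 q12; rearrange p12 q12; lra.
  + have := u2 k3 k3N; have := v13 p12 q12 pq12 q12N.
    rearrange p12 k3; rearrange q12 k3; rearrange p12 q12; lra.
  + have := u2 q12 ltac:(lia); have := v13 p12 q12 pq12 q12N.
    rewrite -hkq; rearrange p12 k3; lra.
- have := u2 k3 k3N; have := v13 k3 q12 ltac:(lia) q12N.
  rewrite hkp; rearrange p12 q12; lra.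
Qed.

Lemma max_plucker_identity : t2 + t13 = Num.max (t1 + t23 - a1 + a2) (t3 + t12).
Proof.
apply/le_anti; rewrite max_plucker_le ge_max.
by rewrite max_plucker_ge_left max_plucker_ge_right.
Qed.

End MaxPluckerIdentity.

Theorem theorem3p1 (R : realFieldType) (N : nat) (a1 a2 a3 : R)
  (phi : 'I_N -> int -> int -> int -> int -> R) :
  (0 < N)%N ->
  a2 <= a1 -> a3 <= a2 ->
  (* (1) *)
  (forall i l m n s,
     phi i (l + 1) m n s = Num.max (phi i l m n s) (phi i l m n (s + 1) - a1)) ->
  (forall i l m n s,
     phi i l (m + 1) n s = Num.max (phi i l m n s) (phi i l m n (s + 1) - a2)) ->
  (forall i l m n s,
     phi i l m (n + 1) s = Num.max (phi i l m n s) (phi i l m n (s + 1) - a3)) ->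
  (* (2) *)
  (forall i1 i2 l m n s,
     phi i1 l m n s + phi i2 l m n s <=
     Num.max (phi i1 l m n (s - 1) + phi i2 l m n (s + 1))
             (phi i2 l m n (s - 1) + phi i1 l m n (s + 1))) ->
  (* (3) *)
  (forall l m n (k1 k2 k3 : nat),
     (k1 < k2)%N -> (k2 < k3)%N -> (k3 <= N)%N ->
     let v := fun i s => phi i l m n s in
     UPcols v (omit1 N k2) + UPcols v (omit2 N.+1 k1 k3) =
     Num.max (UPcols v (omit1 N k3) + UPcols v (omit2 N.+1 k1 k2))
             (UPcols v (omit1 N k1) + UPcols v (omit2 N.+1 k2 k3))) ->
  let tau := fun l m n : int =>
    UP (\matrix_(i < N, j < N) phi i l m n (Posz j)) in
  forall l m n : int,
    tau l (m + 1) n + tau (l + 1) m (n + 1) =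
    Num.max (tau (l + 1) m n + tau l (m + 1) (n + 1) - a1 + a2)
            (tau l m (n + 1) + tau (l + 1) (m + 1) n).
Proof.
move=> _ a21 a32 eq1 eq2 eq3 exch plucker tau l m n.
pose g i s := phi i l m n s.
have g_exch : exchangeable g by move=> i1 i2 s; exact: exch.
apply: (@max_plucker_identity _ N (fun k => UPcols g (omit1 N k))
  (fun p q => UPcols g (omit2 N.+1 p q)) a1 a2 a3 a21 a32).
- by move=> p pN; rewrite omit2_last.
- by move=> k1 k2 k3; exact: plucker.
- apply: (UP_single_shift g_exch (E := fun i s => phi i (l + 1) m n s)) => i s.
  exact: eq1.
- apply: (UP_single_shift g_exch (E := fun i s => phi i l (m + 1) n s)) => i s.
  exact: eq2.
- apply: (UP_single_shift g_exch (E := fun i s => phi i l m (n + 1) s)) => i s.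
  exact: eq3.
- apply: (UP_double_shift g_exch (F := fun i s => phi i l (m + 1) n s)
    (E := fun i s => phi i (l + 1) (m + 1) n s) a21) => i s; [exact: eq2 | exact: eq1].
- apply: (UP_double_shift g_exch (F := fun i s => phi i l m (n + 1) s)
    (E := fun i s => phi i (l + 1) m (n + 1) s) (le_trans a32 a21)) => i s;
    [exact: eq3 | exact: eq1].
- apply: (UP_double_shift g_exch (F := fun i s => phi i l m (n + 1) s)
    (E := fun i s => phi i l (m + 1) (n + 1) s) a32) => i s; [exact: eq3 | exact: eq2].
Qed.
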